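(* Let $K \subset L$ be fields and let $D: L \to L$ be a derivation (an additive map satisfying $D(ab) = aD(b) + D(a)b$) such that $\ker D = K$. Then the map \[ L \otimes_K \ker D^1 \longrightarrow \Omega_{L/K}, \qquad f \otimes \omega \mapsto f\omega, \] is injective.
   Context: $\Omega_{L/K}$ is the $L$-vector space of Kähler differentials of $L$ over $K$, with universal $K$-derivation $d: L \to \Omega_{L/K}$. Since $D(K)=0$, there is a unique $K$-linear map $D^1: \Omega_{L/K} \to \Omega_{L/K}$ with $D^1(f\, dg) = (Df)\, dg + f\, d(Dg)$ for all $f, g \in L$; $\ker D^1$ is a $K$-subspace of $\Omega_{L/K}$. *)

From HB Require Import structures.
From mathcomp Require Import all_boot all_order all_algebra.
Set Implicit Arguments. Unset Strict Implicit. Unset Printing Implicit Defensive.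
Import GRing.Theory.
Local Open Scope ring_scope.

Definition is_derivation (L : fieldType) (D : L -> L) : Prop :=
  (forall a b, D (a + b) = D a + D b) /\
  (forall a b, D (a * b) = a * D b + D a * b).

Definition kerD (L : fieldType) (D : L -> L) : pred L := fun x => D x == 0.

Definition is_Kder (L : fieldType) (K : pred L) (M : lmodType L) (d : L -> M)
  : Prop :=
  (forall a b, d (a + b) = d a + d b) /\
  (forall k a, k \in K -> d (k * a) = k *: d a) /\
  (forall a b, d (a * b) = a *: d b + b *: d a).

Definition Llinear (L : fieldType) (U V : lmodType L) (phi : U -> V) : Prop :=
  forall (a : L) (x y : U), phi (a *: x + y) = a *: phi x + phi y.

(* (Om, d) is the module of Kaehler differentials Omega_{L/K} with universal
   K-derivation d, characterized by its universal property. *)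
Definition is_kahler (L : fieldType) (K : pred L) (Om : lmodType L)
  (d : L -> Om) : Prop :=
  is_Kder K d /\
  forall (M : lmodType L) (delta : L -> M), is_Kder K delta ->
    exists phi : Om -> M,
      [/\ Llinear phi, (forall f, phi (d f) = delta f) &
          forall psi : Om -> M, Llinear psi ->
            (forall f, psi (d f) = delta f) -> forall x, psi x = phi x].

Definition is_D1 (L : fieldType) (D : L -> L) (Om : lmodType L) (d : L -> Om)
  (D1 : Om -> Om) : Prop :=
  [/\ (forall x y, D1 (x + y) = D1 x + D1 y),
      (forall k x, k \in kerD D -> D1 (k *: x) = k *: D1 x) &
      (forall f g, D1 (f *: d g) = D f *: d g + f *: d (D g))].

Definition kerD1 (L : fieldType) (Om : lmodType L) (D1 : Om -> Om) : pred Om :=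
  fun w => D1 w == 0.

(* t : L x W -> A is K-balanced and biadditive (only its values on W matter). *)
Definition balanced (L : fieldType) (K : pred L) (Om : lmodType L)
  (W : pred Om) (A : zmodType) (t : L -> Om -> A) : Prop :=
  [/\ (forall f1 f2 w, w \in W -> t (f1 + f2) w = t f1 w + t f2 w),
      (forall f w1 w2, w1 \in W -> w2 \in W -> t f (w1 + w2) = t f w1 + t f w2) &
      (forall k f w, k \in K -> w \in W -> t (k * f) w = t f (k *: w))].

(* (T, t) is the tensor product L (x)_K W, with t f w = f (x) w,
   characterized by its universal property (as an additive group). *)
Definition is_tensor (L : fieldType) (K : pred L) (Om : lmodType L)
  (W : pred Om) (T : zmodType) (t : L -> Om -> T) : Prop :=
  balanced K W t /\
  forall (A : zmodType) (b : L -> Om -> A), balanced K W b ->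
    exists phi : T -> A,
      [/\ (forall x y, phi (x + y) = phi x + phi y),
          (forall f w, w \in W -> phi (t f w) = b f w) &
          forall psi : T -> A, (forall x y, psi (x + y) = psi x + psi y) ->
            (forall f w, w \in W -> psi (t f w) = b f w) ->
            forall x, psi x = phi x].

From HB Require Import structures.
From mathcomp Require Import all_boot all_order all_algebra.
From mathcomp Require Import boolp.
Set Implicit Arguments. Unset Strict Implicit. Unset Printing Implicit Defensive.
Import GRing.Theory.
Local Open Scope ring_scope.

(* For w in ker D1 the Leibniz rule for D1 reads D1 (a w) = (D a) w, so
   applying D1 to a relation sum_i f_i w_i = 0 among elements of ker D1 gives
   the relation sum_i D(f_i) w_i = 0.  Once some f_i0 is normalised to 1, the
   derived relation has fewer nonzero coefficients, and subtracting a multiple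
   of it from the original one kills another coefficient.  By induction on the
   number of nonzero coefficients, every such relation therefore also holds for
   sum_i f_i (x) w_i in L (x)_K ker D1; the base case, where all coefficients
   lie in K = ker D, is K-balancedness.  The Leibniz rule for D1 and the fact
   that the tensor product is spanned by pure tensors both follow from the
   universal properties. *)

Lemma sub_count_ltn (I : eqType) (a1 a2 : pred I) (s : seq I) (i : I) :
  subpred a1 a2 -> i \in s -> a2 i -> ~~ a1 i -> (count a1 s < count a2 s)%N.
Proof.
move=> a12; elim: s => // j s IHs; rewrite inE => /predU1P[<- | si] a2i a1i /=.
  by rewrite a2i (negbTE a1i) add0n add1n ltnS sub_count.
rewrite -addnS leq_add ?(IHs si a2i a1i) //.
by case a1j: (a1 j); rewrite // a12.
Qed.

Section Additive.
Variables (U V : zmodType) (f : U -> V).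
Hypothesis fD : {morph f : x y / x + y}.

Lemma additive0 : f 0 = 0.
Proof. by apply: (addIr (f 0)); rewrite -fD !add0r. Qed.

Lemma additiveN : {morph f : x / - x}.
Proof. by move=> x; apply: (addIr (f x)); rewrite -fD !addNr additive0. Qed.

Lemma additive_sum (I : Type) (r : seq I) (F : I -> U) :
  f (\sum_(i <- r) F i) = \sum_(i <- r) f (F i).
Proof. exact: (big_morph f fD additive0). Qed.

End Additive.

Section Derivation.
Variables (L : fieldType) (D : L -> L).
Hypothesis hD : is_derivation D.

Lemma derivation0 : D 0 = 0.
Proof. exact: additive0 hD.1. Qed.

Lemma derivation1 : D 1 = 0.
Proof.
have := hD.2 1 1; rewrite !mulr1 mul1r => D1E.
by apply: (addrI (D 1)); rewrite addr0 -D1E.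
Qed.

End Derivation.

Section Balanced.
Variables (L : fieldType) (K : pred L) (Om : lmodType L) (W : pred Om).
Variables (T : zmodType) (t : L -> Om -> T).
Hypothesis t_balanced : balanced K W t.

Lemma balancedDl f g w : w \in W -> t (f + g) w = t f w + t g w.
Proof. by case: t_balanced => tD _ _; apply: tD. Qed.

Lemma balanced0l w : w \in W -> t 0 w = 0.
Proof. by move=> wW; apply: additive0 (fun f g => balancedDl f g wW). Qed.

Lemma balancedNl f w : w \in W -> t (- f) w = - t f w.
Proof. by move=> wW; apply: (@additiveN _ _ (t^~ w) (fun a b => balancedDl a b wW)). Qed.

End Balanced.

Section KahlerGenerated.
Variables (L : fieldType) (K : pred L) (Om : lmodType L) (d : L -> Om).
Hypothesis d_kahler : is_kahler K d.

Lemma kahler_endo_id (psi : Om -> Om) :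
  Llinear psi -> (forall f, psi (d f) = d f) -> psi =1 id.
Proof.
case: d_kahler => dK /(_ Om d dK) [phi [_ _ phi_uniq]] psiL psid x.
by rewrite [LHS](phi_uniq psi) // [RHS](phi_uniq id).
Qed.

Definition kahler_span : pred Om :=
  fun x => `[< exists s : seq (L * L), x = \sum_(p <- s) p.1 *: d p.2 >].

Lemma kahler_span_submod_closed : submod_closed kahler_span.
Proof.
split; first by apply/asboolP; exists [::]; rewrite big_nil.
move=> a u v /asboolP[su ->] /asboolP[sv ->]; apply/asboolP.
exists ([seq (a * p.1, p.2) | p <- su] ++ sv).
rewrite big_cat big_map scaler_sumr; congr (_ + _).
by apply: eq_bigr => p _; rewrite scalerA.
Qed.

HB.instance Definition _ := GRing.isSubmodClosed.Build L Om kahler_span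
  (GRing.submod_closed_semi kahler_span_submod_closed).

Inductive kahler_span_type : predArgType := KahlerSpan x of x \in kahler_span.
Definition kahler_span_val (u : kahler_span_type) := let: KahlerSpan x _ := u in x.
HB.instance Definition _ := [isSub of kahler_span_type for kahler_span_val].
HB.instance Definition _ := [Choice of kahler_span_type by <:].
HB.instance Definition _ := [SubChoice_isSubLmodule of kahler_span_type by <:].

Lemma kahler_span_d f : d f \in kahler_span.
Proof. by apply/asboolP; exists [:: (1, f)]; rewrite big_seq1 scale1r. Qed.

(* d corestricts to a K-derivation delta into the span S of its image; the
   induced map phi : Omega -> S followed by the inclusion fixes every d f, so it
   is the identity and S is all of Omega.  Same argument for tensor_generated. *)
Lemma kahler_generated x :
  exists s : seq (L * L), x = \sum_(p <- s) p.1 *: d p.2.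
Proof.
pose delta f : kahler_span_type := Sub (d f) (kahler_span_d f).
have deltaK : is_Kder K delta.
  have [[dD [dK dM]] _] := d_kahler.
  split; [|split] => [f g|k f kK|f g]; apply: val_inj; rewrite /delta.
  - by rewrite raddfD /= dD.
  - by rewrite linearZ /= dK.
  - by rewrite linearD !linearZ /= dM.
have [phi [phiL phid _]] := d_kahler.2 _ _ deltaK.
have val_phi : val \o phi =1 id.
  apply: (kahler_endo_id (psi := val \o phi)) => [a u v|f]; rewrite /comp ?phid //.
  by rewrite phiL linearP.
have : x \in kahler_span by rewrite -[x]val_phi; apply: valP.
by move/asboolP.
Qed.

End KahlerGenerated.

Section TensorGenerated.
Variables (L : fieldType) (K : pred L) (Om : lmodType L) (W : pred Om).
Variables (T : zmodType) (t : L -> Om -> T).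
Hypothesis t_tensor : is_tensor K W t.

Lemma tensor_endo_id (psi : T -> T) :
    {morph psi : x y / x + y} ->
  (forall f w, w \in W -> psi (t f w) = t f w) -> psi =1 id.
Proof.
case: t_tensor => tK /(_ T t tK) [phi [_ _ phi_uniq]] psiD psit x.
by rewrite [LHS](phi_uniq psi) // [RHS](phi_uniq id).
Qed.

Definition tensor_span : pred T := fun x =>
  `[< exists s : seq (L * Om), all (fun p => p.2 \in W) s /\ x = \sum_(p <- s) t p.1 p.2 >].

Lemma tensor_span_zmod_closed : zmod_closed tensor_span.
Proof.
split; first by apply/asboolP; exists [::]; rewrite big_nil.
move=> u v /asboolP[su [suW ->]] /asboolP[sv [svW ->]]; apply/asboolP.
exists (su ++ [seq (- p.1, p.2) | p <- sv]); split.
  by rewrite all_cat suW all_map.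
rewrite big_cat big_map -sumrN; congr (_ + _).
by apply: eq_big_seq => p /(allP svW) pW; rewrite (balancedNl t_tensor.1).
Qed.

HB.instance Definition _ := GRing.isZmodClosed.Build T tensor_span
  tensor_span_zmod_closed.

Inductive tensor_span_type : predArgType := TensorSpan x of x \in tensor_span.
Definition tensor_span_val (u : tensor_span_type) := let: TensorSpan x _ := u in x.
HB.instance Definition _ := [isSub of tensor_span_type for tensor_span_val].
HB.instance Definition _ := [Choice of tensor_span_type by <:].
HB.instance Definition _ := [SubChoice_isSubZmodule of tensor_span_type by <:].

Lemma tensor_span_t f w : w \in W -> t f w \in tensor_span.
Proof. by move=> wW; apply/asboolP; exists [:: (f, w)]; rewrite /= wW big_seq1. Qed.

Lemma tensor_generated x :
  exists s : seq (L * Om), all (fun p => p.2 \in W) s /\ x = \sum_(p <- s) t p.1 p.2.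
Proof.
pose b f w : tensor_span_type := insubd 0 (t f w).
have bE f w : t f w \in tensor_span -> val (b f w) = t f w by apply: insubdK.
have [[tDl tDr tK] _] := t_tensor.
have b_balanced : balanced K W b.
  split=> [f g w wW|f u v uW vW|k f w kK wW]; apply: val_inj.
  - by rewrite raddfD /= !bE ?tensor_span_t // tDl.
  - have tuv : t f (u + v) = t f u + t f v by apply: tDr.
    by rewrite raddfD /= !bE ?tuv ?rpredD ?tensor_span_t.
  - by rewrite !bE -?tK ?tensor_span_t.
have [phi [phiD phib _]] := t_tensor.2 _ _ b_balanced.
have val_phi : val \o phi =1 id.
  apply: (tensor_endo_id (psi := val \o phi)) => [u v|f w wW]; rewrite /comp.
    by rewrite phiD raddfD.
  by rewrite phib //; apply: bE; apply: tensor_span_t.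
have : x \in tensor_span by rewrite -[x]val_phi; apply: valP.
by move/asboolP.
Qed.

End TensorGenerated.

Section KerD1Relations.
Variables (L : fieldType) (D : L -> L) (Om : lmodType L) (D1 : Om -> Om).
Variables (T : zmodType) (t : L -> Om -> T).
Hypotheses (hD : is_derivation D) (D1D : {morph D1 : x y / x + y}).
Hypothesis D1Z_kerD1 : forall a w, w \in kerD1 D1 -> D1 (a *: w) = D a *: w.
Hypothesis t_balanced : balanced (kerD D) (kerD1 D1) t.

Local Notation W := (kerD1 D1).

Lemma kerD1_0 : 0 \in W.
Proof. by rewrite unfold_in /= (additive0 D1D). Qed.

Lemma kerD1D u v : u \in W -> v \in W -> u + v \in W.
Proof. by rewrite !unfold_in /= D1D => /eqP-> /eqP->; rewrite addr0. Qed.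

Lemma kerD1Z k w : k \in kerD D -> w \in W -> k *: w \in W.
Proof. by rewrite !unfold_in /= => /eqP Dk wW; rewrite D1Z_kerD1 // Dk scale0r. Qed.

Lemma balanced0r f : t f 0 = 0.
Proof.
by case: t_balanced => _ tD _; apply: (addrI (t f 0)); rewrite -tD ?kerD1_0 // !addr0.
Qed.

Lemma balanced_sumr a (I : Type) (r : seq I) (P : pred I) (F : I -> Om) :
    (forall i, P i -> F i \in W) ->
  t a (\sum_(i <- r | P i) F i) = \sum_(i <- r | P i) t a (F i).
Proof.
case: t_balanced => _ tD _ FW.
pose Q (u : Om) (x : T) := u \in W /\ t a u = x.
suff [] : Q (\sum_(i <- r | P i) F i) (\sum_(i <- r | P i) t a (F i)) by [].
apply: big_ind2 => [|u x v y [uW <-] [vW <-]|i Pi]; split.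
- exact: kerD1_0.
- exact: balanced0r.
- exact: kerD1D.
- exact: tD.
- exact: FW.
- by [].
Qed.

Variables (I : eqType) (r : seq I) (w : I -> Om).
Hypothesis wW : {in r, forall i, w i \in W}.

Local Notation lincomb f := (\sum_(i <- r) f i *: w i).
Local Notation tensor_sum f := (\sum_(i <- r) t (f i) (w i)).
Local Notation supp_size f := (count (fun i => f i != 0) r).

Lemma lincomb_D (f : I -> L) c : lincomb f = 0 -> lincomb (fun i => D (c * f i)) = 0.
Proof.
move=> rel_f; transitivity (D1 (c *: lincomb f)).
  rewrite scaler_sumr (additive_sum D1D).
  by apply: eq_big_seq => i /wW wW_i; rewrite scalerA D1Z_kerD1.
by rewrite rel_f scaler0 (additive0 D1D).
Qed.

Lemma tensor_sum_kerD (f : I -> L) a :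
  {in r, forall i, f i \in kerD D} -> tensor_sum (fun i => f i * a) = t a (lincomb f).
Proof.
case: t_balanced => _ _ tK fK.
rewrite [in RHS]big_seq balanced_sumr => [|i ri]; last exact: kerD1Z (fK i ri) (wW ri).
by rewrite big_seq; apply: eq_bigr => i ri; rewrite tK; [| apply: fK | apply: wW].
Qed.

Lemma tensor_sum_split (f g : I -> L) :
  tensor_sum f = tensor_sum (fun i => f i - g i) + tensor_sum g.
Proof.
rewrite -big_split; apply: eq_big_seq => i ri /=.
by rewrite -(balancedDl t_balanced) ?wW // subrK.
Qed.

Lemma tensor_sum_eq0 (f : I -> L) : lincomb f = 0 -> tensor_sum f = 0.
Proof.
have [n] := ubnP (supp_size f); elim: n f => // n IHn f.
rewrite ltnS => supp_f rel_f.
have [/hasP[i0 ri0 fi0] | /hasPn f0] := boolP (has (fun i => f i != 0) r); last first.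
  by rewrite big_seq big1 // => i /[dup] /wW/(balanced0l t_balanced) + /f0/negPn/eqP->.
pose c := (f i0)^-1; pose g i := D (c * f i).
have g0 i : f i = 0 -> g i = 0 by move=> fi; rewrite /g fi mulr0 (derivation0 hD).
have rel_g e : lincomb (fun i => e * g i) = 0.
  by under eq_bigr do rewrite -scalerA; rewrite -scaler_sumr lincomb_D // scaler0.
have supp_g : (supp_size g < n)%N.
  apply: leq_trans supp_f; apply: (sub_count_ltn _ ri0 fi0).
    by move=> i; apply: contra_neq => /g0.
  by rewrite negbK /g mulVf // (derivation1 hD).
have tensor_sum_g e : tensor_sum (fun i => e * g i) = 0.
  apply: IHn (rel_g e); apply: leq_ltn_trans supp_g.
  by apply: sub_count => i; apply: contra_neq => ->; rewrite mulr0.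
have [/hasP[i1 ri1 gi1] | /hasPn gK] := boolP (has (fun i => g i != 0) r).
  pose e := f i1 / g i1.
  rewrite (tensor_sum_split f (fun i => e * g i)) tensor_sum_g addr0; apply: IHn.
    apply: leq_trans supp_f; apply: (sub_count_ltn _ ri1).
    - by move=> i; apply: contra_neq => /[dup] /g0-> ->; rewrite mulr0 subr0.
    - by apply: contra_neq gi1; apply: g0.
    - by rewrite negbK /e divfK // subrr.
  by under eq_bigr do rewrite scalerBl; rewrite sumrB rel_f rel_g subrr.
have fE i : f i = c * f i * f i0 by rewrite mulrC mulVKf.
under eq_bigr do rewrite fE.
rewrite tensor_sum_kerD => [|i /gK/negPn//].
rewrite -(eq_bigr _ (fun _ _ => scalerA _ _ _)) -scaler_sumr rel_f scaler0.
exact: balanced0r.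
Qed.

End KerD1Relations.

Lemma D1Z (L : fieldType) (D : L -> L) (Om : lmodType L) (d : L -> Om) (D1 : Om -> Om) :
    is_derivation D -> is_kahler (kerD D) d -> is_D1 D d D1 ->
  forall a x, D1 (a *: x) = D a *: x + a *: D1 x.
Proof.
move=> [_ DM] d_kahler [D1D _ D1d] a x.
have [s ->] := kahler_generated d_kahler x.
rewrite !scaler_sumr !(additive_sum D1D) scaler_sumr -big_split.
apply: eq_bigr => -[f g] _ /=.
rewrite !scalerA !D1d DM scalerDl scalerDr !scalerA.
by rewrite addrCA addrA.
Qed.

Theorem lemma3p7 (L : fieldType) (D : L -> L) (Om : lmodType L) (d : L -> Om)
  (D1 : Om -> Om) (T : zmodType) (t : L -> Om -> T) (mu : T -> Om) :
  is_derivation D ->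
  is_kahler (kerD D) d ->
  is_D1 D d D1 ->
  is_tensor (kerD D) (kerD1 D1) t ->
  (forall x y, mu (x + y) = mu x + mu y) ->
  (forall f w, w \in kerD1 D1 -> mu (t f w) = f *: w) ->
  injective mu.
Proof.
move=> hD d_kahler hD1 t_tensor muD mu_t x y mu_xy.
have [D1D _ _] := hD1.
have D1Z_kerD1 a w : w \in kerD1 D1 -> D1 (a *: w) = D a *: w.
  by rewrite unfold_in /= (D1Z hD d_kahler hD1) => /eqP->; rewrite scaler0 addr0.
have mu0 : mu (x - y) = 0 by rewrite muD (additiveN muD) mu_xy subrr.
apply/eqP; rewrite -subr_eq0; apply/eqP; move: mu0.
have [s [sW ->]] := tensor_generated t_tensor (x - y).
rewrite (additive_sum muD) => rel_s.
apply: (tensor_sum_eq0 hD D1D D1Z_kerD1 t_tensor.1 (w := snd)) => [p /(allP sW)//|].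
by rewrite -[RHS]rel_s; apply: eq_big_seq => p /(allP sW) pW; rewrite mu_t.
Qed.
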